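(* Consider the seven lines of a Fano plane, each carrying an orientation, and fix a reference orientation for each line. Let $P$ be the set of lines whose orientation agrees with the reference and $R$ the set of lines whose orientation is reversed, with $N(P)+N(R)=7$. For a line $l_1$, the operation $\mathrm{PL}(l_1)$ reverses the orientation of each of the six lines other than $l_1$ and leaves the orientation of $l_1$ unchanged. After performing $\mathrm{PL}(l_1)$: if $l_1\in P$ then the new count is $N(R)=N(P)-1$ (with $N(P)$ the count before the operation), and if $l_1\in R$ then the new count is $N(R)=N(P)+1$. Consequently, starting from a presentation with $N(R)=0$ (standard Type I box-kite), $N(R)=2$ (standard Type II box-kite), $N(R)=6$ (explosion of a Type I), or $N(R)\in\{4,6\}$ (explosion of a Type II), any subsequent operation $\mathrm{PL}(l_2)$ yields a presentation with $N(R)$ even.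
   Context: Here the Fano plane presentation is that of a box-kite: seven nodes (six L-indices $a,\dots,f$ and the strut constant $S$ in the center) and seven lines (the trips), each oriented by its cyclic positive order of multiplication of the corresponding Cayley–Dickson basis units. The reference orientation is that of a standard Type I box-kite. $\mathrm{PL}(l)$ is the operation of adding a new high power of two $g$ to the four nodes not on the line $l$ (which, by Rule 2 of the Cayley–Dickson sign conventions, reverses exactly the six lines other than $l$). *)

From mathcomp Require Import all_boot.
Set Implicit Arguments. Unset Strict Implicit. Unset Printing Implicit Defensive.

(* The seven lines of the Fano plane are indexed by 'I_7.  (For reference,
   line i is the triple {i, i+1, i+3} mod 7 of the standard Fano plane.)
   An orientation of each line is recorded RELATIVE to a fixed reference
   orientation: [o l = true] means line l is reversed w.r.t. the reference,
   [o l = false] means it agrees with the reference. *)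
Definition fano_line := 'I_7.

Definition fano_points (l : fano_line) : seq nat :=
  [:: val l; (val l + 1) %% 7; (val l + 3) %% 7].

Definition orientation := {ffun fano_line -> bool}.

Definition Pset (o : orientation) : {set fano_line} := [set l | ~~ o l].
Definition Rset (o : orientation) : {set fano_line} := [set l | o l].

Definition PL (l1 : fano_line) (o : orientation) : orientation :=
  [ffun m => if m == l1 then o m else ~~ o m].

From mathcomp Require Import all_boot.

(* PL(l) turns the reversed lines into P minus l when l is in P, and into P
   plus l when l is in R, so afterwards |R| = |P| - 1 or |P| + 1.  Since
   |P| + |R| = 7 is odd, the new |R| has the same parity as the old one, and
   an even |R| stays even. *)

Lemma Pset_compl (o : orientation) : Pset o = ~: Rset o.
Proof. by apply/setP=> l; rewrite !inE. Qed.

Lemma Rset_notin_Pset (l : fano_line) (o : orientation) :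
  (l \in Rset o) = (l \notin Pset o).
Proof. by rewrite !inE negbK. Qed.

Lemma card_Pset_Rset (o : orientation) : (#|Pset o| + #|Rset o| = 7)%N.
Proof. by rewrite Pset_compl addnC cardsC card_ord. Qed.

Lemma Rset_PL_Pset (l : fano_line) (o : orientation) :
  l \in Pset o -> Rset (PL l o) = Pset o :\ l.
Proof.
rewrite inE => ol; apply/setP=> m; rewrite !inE ffunE.
by case: eqP => [->|]; rewrite ?(negbTE ol).
Qed.

Lemma Rset_PL_Rset (l : fano_line) (o : orientation) :
  l \in Rset o -> Rset (PL l o) = l |: Pset o.
Proof. by rewrite inE => ol; apply/setP=> m; rewrite !inE ffunE; case: eqP => [->|]. Qed.

Lemma card_Rset_PL_Pset (l : fano_line) (o : orientation) :
  l \in Pset o -> #|Rset (PL l o)| = (#|Pset o| - 1)%N.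
Proof. by move=> lP; rewrite Rset_PL_Pset // (cardsD1 l (Pset o)) lP add1n subn1. Qed.

Lemma card_Rset_PL_Rset (l : fano_line) (o : orientation) :
  l \in Rset o -> #|Rset (PL l o)| = (#|Pset o| + 1)%N.
Proof.
by move=> lR; rewrite Rset_PL_Rset // cardsU1 addnC -Rset_notin_Pset lR.
Qed.

Lemma odd_card_Rset (o : orientation) : odd #|Rset o| = ~~ odd #|Pset o|.
Proof. by have /(congr1 odd) := card_Pset_Rset o; rewrite oddD => /addbP. Qed.

Lemma odd_card_Rset_PL (l : fano_line) (o : orientation) :
  odd #|Rset (PL l o)| = odd #|Rset o|.
Proof.
rewrite [RHS]odd_card_Rset; have [lP | lR] := boolP (l \in Pset o).
- have P_gt0 : (0 < #|Pset o|)%N by apply/card_gt0P; exists l.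
  rewrite card_Rset_PL_Pset //.
  by move: P_gt0; case: #|Pset o| => // n _; rewrite subn1 /= negbK.
- by rewrite card_Rset_PL_Rset ?addn1 // Rset_notin_Pset.
Qed.

Theorem lemma3 (o : orientation) :
  (forall l1 : fano_line, l1 \in Pset o ->
      #|Rset (PL l1 o)| = (#|Pset o| - 1)%N) /\
  (forall l1 : fano_line, l1 \in Rset o ->
      #|Rset (PL l1 o)| = (#|Pset o| + 1)%N) /\
  (#|Rset o| \in [:: 0; 2; 6; 4]%N ->
      forall l2 : fano_line, ~~ odd #|Rset (PL l2 o)|).
Proof.
split; first exact: (@card_Rset_PL_Pset ^~ o).
split; first exact: (@card_Rset_PL_Rset ^~ o).
move=> R_even l2; rewrite odd_card_Rset_PL.
by move: R_even; rewrite !inE => /or4P[] /eqP ->.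
Qed.
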